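(* Let $\Gamma$ be a (connected, finite) graph. The image of the exterior intersection pairing \[\mathrm H_1(\Gamma)\otimes\mathrm H_1(\Gamma)\to\mathbb Q\cdot E^+,\qquad\gamma_0\otimes\gamma_1\mapsto\sum_{e\in E}e^*(\gamma_0)e^*(\gamma_1)\cdot e\] is exactly the span of the formal sums of the edges of the maximal cut systems of $\Gamma$.
   Context: A graph consists of finite sets of vertices, oriented edges $E$, half-edges, a source map $s$ and a fixed-point-free involution $e\mapsto e^{-1}$ on $E$ with $t(e)=s(e^{-1})$. $\mathbb Q\cdot E^+$ is the vector space with basis the unoriented edges (an oriented edge $e$ is identified with its unoriented class). $\mathrm H_1(\Gamma)=\mathrm H_1(\Gamma,\mathbb Q)$, and for an edge $e$, $e^*\in\mathrm H^1(\Gamma)$ gives the (signed) multiplicity of $e$ in a homology class. A bridge is an edge whose removal (with its inverse) disconnects $\Gamma$. A cut pair is a pair of non-bridge edges $e_0,e_1$ with $e_1\ne e_0^{\pm1}$ such that $\Gamma\setminus\{e_0^{\pm1},e_1^{\pm1}\}$ is disconnected with $s(e_0)$ and $s(e_1)$ in different components. The relation on non-bridge edges $e_0\sim e_1$ iff $(e_0,e_1)$ is a cut pair or $e_0=e_1$ is an equivalence relation; its equivalence classes are the maximal cut systems (possibly of size $1$). The formal sum of a maximal cut system is the sum in $\mathbb Q\cdot E^+$ of the unoriented classes of its edges. *)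

From HB Require Import structures.
From mathcomp Require Import all_boot all_order all_algebra.
Set Implicit Arguments. Unset Strict Implicit. Unset Printing Implicit Defensive.
Import Order.TTheory GRing.Theory Num.Theory.
Local Open Scope ring_scope.

(* A finite graph: vertices, oriented edges, source map, and a
   fixed-point-free involution e |-> e^{-1}; t(e) := s(e^{-1}).
   (Half-edges/legs not belonging to edges play no role in H_1 or in
   the notions below and are omitted.) *)
Record graph := Graph {
  vert : finType;
  edge : finType;
  src : edge -> vert;
  einv : edge -> edge;
  einvK : involutive einv;
  einv_neq : forall e, einv e != e
}.

Section GraphDefs.
Variable G : graph.
Local Notation V := (vert G).
Local Notation E := (edge G).
Local Notation s := (@src G).
Local Notation inv := (@einv G).

Definition tgt (e : E) : V := s (inv e).

Definition adj (P : pred E) : rel V :=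
  fun x y => [exists e, [&& P e, s e == x & tgt e == y]].

Definition connected_using (P : pred E) : bool :=
  [forall x, forall y, connect (adj P) x y].

Definition gconnected : bool := connected_using predT.

Definition bridge (e : E) : bool :=
  ~~ connected_using (fun e' => (e' != e) && (e' != inv e)).

Definition cut_pair (e0 e1 : E) : bool :=
  [&& ~~ bridge e0, ~~ bridge e1, e1 != e0, e1 != inv e0 &
      ~~ connect (adj (fun e' => [&& e' != e0, e' != inv e0, e' != e1 & e' != inv e1]))
           (s e0) (s e1)].

(* maximal cut systems: equivalence classes of non-bridge edges for
   e0 ~ e1 <-> (e0, e1) cut pair or e0 = e1 *)
Definition cut_class (e0 : E) : {set E} :=
  [set e1 | ~~ bridge e1 & (e1 == e0) || cut_pair e0 e1].

Definition max_cut_system (C : {set E}) : Prop :=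
  exists e0, ~~ bridge e0 /\ C = cut_class e0.

(* Q.E^+ : functions E -> Q constant on {e, e^{-1}}; the basis vector of
   the unoriented edge [e] is the indicator of {e, e^{-1}}.  An element
   is given by its coordinates, read off at any representative. *)
Definition same_class (e e' : E) : bool := (e' == e) || (e' == inv e).

Definition formal_sum (C : {set E}) : {ffun E -> rat} :=
  [ffun e => \sum_(e' in C | same_class e e') 1].

(* 1-chains with rational coefficients: antisymmetric functions on oriented
   edges; e^*(c) = c e.  Cycles (= H_1, graphs being 1-dimensional). *)
Definition is_cycle (c : {ffun E -> rat}) : Prop :=
  (forall e, c (inv e) = - c e) /\
  (forall v : V, \sum_(e | s e == v) c e = 0).

Definition ext_pairing (g0 g1 : {ffun E -> rat}) : {ffun E -> rat} :=
  [ffun e => \sum_(e' | same_class e e') g0 e' * g1 e'].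

End GraphDefs.

Definition in_span (T : finType) (S : {ffun T -> rat} -> Prop) (x : {ffun T -> rat}) : Prop :=
  exists (n : nat) (a : 'I_n -> rat) (v : 'I_n -> {ffun T -> rat}),
    (forall i, S (v i)) /\ x = [ffun t => \sum_(i < n) a i * v i t].

From mathcomp Require Import all_boot all_order all_algebra.
From mathcomp Require Import lra.
Set Implicit Arguments. Unset Strict Implicit. Unset Printing Implicit Defensive.
Import Order.TTheory GRing.Theory Num.Theory.
Local Open Scope ring_scope.

(* A cycle vanishes on a bridge, and on the two edges of a cut pair it takes the
   same value: count its flux across the vertex set cut off by the bridge or the
   pair.  Conversely, two non-bridge edges on which all cycles agree form a cut
   pair.  Hence a product of two cycles is constant on every maximal cut system,
   vanishes on bridges, and is a combination of formal sums of cut systems.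
   For the converse, fix a non-bridge edge e0 with cut system C.  Take a simple
   walk y from t(e0) back to s(e0) avoiding e0, then a second one z that never
   follows y forwards outside C; z exists since otherwise the only edge along
   which y leaves the part reachable by such walks would form a cut pair with
   e0.  Finally let q be a walk along the positive part of the flow y + z of
   value 2.  The cycles e0 + q and e0 + y + z - q share no edge outside C, even
   up to orientation, so their product is the formal sum of C. *)

Section Span.
Variable T : finType.
Implicit Types (S : {ffun T -> rat} -> Prop) (x y : {ffun T -> rat}).

Lemma in_span_sum (I : finType) S (P : pred I) (c : I -> rat) (v : I -> {ffun T -> rat}) :
  (forall i, P i -> S (v i)) -> in_span S [ffun t => \sum_(i | P i) c i * v i t].
Proof.
move=> Sv; exists #|P|, (fun k => c (enum_val k)), (fun k => v (enum_val k)); split.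
  by move=> k; apply: Sv; apply: enum_valP.
by apply/ffunP => t; rewrite !ffunE (big_enum_val (A := P) (fun i => c i * v i t)).
Qed.

Lemma in_span_gen S y : S y -> in_span S y.
Proof.
move=> Sy; exists 1%N, (fun _ => 1), (fun _ => y); split => //.
by apply/ffunP => t; rewrite ffunE big_ord1 mul1r.
Qed.

Lemma in_span0 S : in_span S 0.
Proof.
exists 0%N, (fun _ => 0), (fun _ => 0); split => [[]//|].
by apply/ffunP => t; rewrite !ffunE big_ord0.
Qed.

Lemma in_spanD S x y : in_span S x -> in_span S y -> in_span S (x + y).
Proof.
move=> [n [a [v [Sv ->]]]] [m [b [w [Sw ->]]]].
pose c (k : 'I_n + 'I_m) := match k with inl i => a i | inr j => b j end.
pose u (k : 'I_n + 'I_m) := match k with inl i => v i | inr j => w j end.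
have -> : [ffun t => \sum_(i < n) a i * v i t] + [ffun t => \sum_(j < m) b j * w j t]
   = [ffun t => \sum_(k | predT k) c k * u k t].
  by apply/ffunP => t; rewrite !ffunE big_sumType.
by apply: in_span_sum => -[i|j] _ /=; [apply: Sv | apply: Sw].
Qed.

Lemma in_spanZ S (k : rat) x : in_span S x -> in_span S [ffun t => k * x t].
Proof.
move=> [n [a [v [Sv ->]]]]; exists n, (fun i => k * a i), v; split => //.
apply/ffunP => t; rewrite !ffunE big_distrr /=.
by apply: eq_bigr => i _; rewrite mulrA.
Qed.

Lemma in_span_trans S S' x :
  in_span S x -> (forall y, S y -> in_span S' y) -> in_span S' x.
Proof.
move=> [n [a [v [Sv ->]]]] SS'.
have -> : [ffun t => \sum_(i < n) a i * v i t] = \sum_(i < n) [ffun t => a i * v i t].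
  by apply/ffunP => t; rewrite sum_ffunE ffunE; apply: eq_bigr => i _; rewrite ffunE.
apply: (big_rec (in_span S')); first exact: in_span0.
by move=> i z _ Sz; apply: in_spanD => //; apply/in_spanZ/SS'.
Qed.

End Span.

Lemma sum_indicator (R : pzSemiRingType) (T : finType) (P : pred T) (a : T) :
  \sum_(i | P i) ((i == a)%:R : R) = (P a)%:R.
Proof.
rewrite big_mkcond (bigD1 a) //= eqxx big1 ?addr0 => [|i /negbTE ->].
  by case: (P a).
by case: (P i).
Qed.

Lemma augment_residue0 (R : realDomainType) (a b c : R) :
  [\/ a = 0, a = 1 | a = -1] ->
  [\/ b = 0, b = 1 /\ a != 1 | b = -1 /\ a != -1] ->
  [\/ c = 0, c = 1 /\ 0 < a + b | c = -1 /\ a + b < 0] ->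
  c * (a + b - c) = 0.
Proof.
by case=> ->; case=> [->|[-> /eqP ?]|[-> /eqP ?]]; case=> [->|[-> ?]|[-> ?]]; lra.
Qed.

Section Graph.
Variable G : graph.
Local Notation V := (vert G).
Local Notation E := (edge G).
Local Notation s := (@src G).
Local Notation tg := (@tgt G).
Local Notation inv := (@einv G).
Implicit Types (e : E) (P Q : pred E) (S : pred V) (w g : {ffun E -> rat}).

Lemma invK : involutive inv. Proof. exact: einvK. Qed.
Lemma inv_inj : injective inv. Proof. exact: can_inj invK. Qed.
Lemma eq_inv e : (e == inv e) = false.
Proof. by rewrite eq_sym; apply/negbTE/einv_neq. Qed.
Lemma inv_eq e e' : (inv e == e') = (e == inv e').
Proof. by apply/eqP/eqP => [<-|->]; rewrite invK. Qed.
Lemma src_inv e : s (inv e) = tg e. Proof. by []. Qed.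
Lemma tgt_inv e : tg (inv e) = s e. Proof. by rewrite /tgt invK. Qed.

Definition inv_closed P := forall e, P (inv e) = P e.

Lemma adjP P x y : reflect (exists e, [/\ P e, s e = x & tg e = y]) (adj P x y).
Proof.
apply: (iffP existsP) => [[e /and3P[Pe /eqP <- /eqP <-]]|[e [Pe <- <-]]].
  by exists e.
by exists e; rewrite Pe !eqxx.
Qed.

Lemma eq_adj P Q : P =1 Q -> adj P =2 adj Q.
Proof. by move=> PQ x y; apply: eq_existsb => e; rewrite PQ. Qed.

Lemma connect_adj_sym P : inv_closed P -> connect_sym (adj P).
Proof.
move=> iP; apply: sym_connect_sym => x y.
by apply/adjP/adjP => -[e [Pe <- <-]]; exists (inv e); rewrite iP tgt_inv.
Qed.

Lemma connect_step P x e : connect (adj P) x (s e) -> P e -> connect (adj P) x (tg e).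
Proof.
by move=> xe Pe; apply: connect_trans xe (connect1 _); apply/adjP; exists e.
Qed.

Lemma connect_exit P x e :
  connect (adj P) x (s e) -> ~~ connect (adj P) x (tg e) -> ~~ P e.
Proof. by move=> xe; apply: contra; apply: connect_step. Qed.

Lemma connect_closed P S x y :
  (forall e, P e -> S (s e) -> S (tg e)) -> S x -> connect (adj P) x y -> S y.
Proof.
move=> clS Sx /connectP[p xp ->]; elim: p x Sx xp => //= z p IHp x Sx.
by case/andP => /adjP[e [Pe ex <-]] ep; apply: IHp ep; apply: clS; rewrite ?ex.
Qed.

Lemma connect_add_edge P Q e x y :
  (forall e', Q e' -> [|| P e', e' == e | e' == inv e]) ->
  connect (adj P) x (s e) = connect (adj P) x (tg e) ->
  connect (adj Q) x y -> connect (adj P) x y.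
Proof.
move=> QP se_te; apply: connect_closed (connect0 _ _) => e' /QP /or3P[Pe'|/eqP->|/eqP->].
- by move/connect_step; apply.
- by rewrite se_te.
- by rewrite src_inv tgt_inv se_te.
Qed.

Lemma connected_usingP P : connected_using P -> forall x y, connect (adj P) x y.
Proof. by move=> /forallP cP x y; move/forallP: (cP x); apply. Qed.

Lemma connected_using_from P x :
  inv_closed P -> (forall y, connect (adj P) x y) -> connected_using P.
Proof.
move=> iP xP; apply/forallP => y; apply/forallP => y'.
by apply: connect_trans (xP y'); rewrite connect_adj_sym.
Qed.

Lemma connect_upath P x y : connect (adj P) x y ->
  exists p, [/\ path (adj P) x p, last x p = y & uniq (x :: p)].
Proof. by case/connectP => p xp ->; case: (shortenP xp) => p' xp' up' _; exists p'. Qed.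

Definition avoid e : pred E := fun e' => (e' != e) && (e' != inv e).
Definition avoid2 e e1 : pred E :=
  fun e' => [&& e' != e, e' != inv e, e' != e1 & e' != inv e1].

Lemma avoid_inv_closed e : inv_closed (avoid e).
Proof. by move=> e'; rewrite /avoid !inv_eq invK andbC. Qed.

Lemma avoid2E e e1 e' : avoid2 e e1 e' = avoid e e' && avoid e1 e'.
Proof. by rewrite /avoid2 /avoid -!andbA. Qed.

Lemma avoid2C e e1 : avoid2 e e1 =1 avoid2 e1 e.
Proof. by move=> e'; rewrite !avoid2E andbC. Qed.

Lemma avoid2_inv_closed e e1 : inv_closed (avoid2 e e1).
Proof. by move=> e'; rewrite !avoid2E !avoid_inv_closed. Qed.

Lemma avoid2_inv e e1 : avoid2 e (inv e1) =1 avoid2 e e1.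
Proof. by move=> e'; rewrite /avoid2 invK [(e' != inv e1) && _]andbC. Qed.

Lemma bridge_inv e : bridge (inv e) = bridge e.
Proof.
rewrite /bridge /connected_using; congr (~~ _).
apply: eq_forallb => x; apply: eq_forallb => y; apply/eq_connect/eq_adj => e'.
by rewrite invK andbC.
Qed.

Lemma nonbridge_connect e : ~~ bridge e -> forall x y, connect (adj (avoid e)) x y.
Proof. by rewrite negbK; apply: connected_usingP. Qed.

Lemma avoid2_connect_all e0 e x y : ~~ bridge e0 ->
  connect (adj (avoid2 e0 e)) x (s e) = connect (adj (avoid2 e0 e)) x (tg e) ->
  connect (adj (avoid2 e0 e)) x y.
Proof.
move=> nb0 se_te; apply: connect_add_edge se_te (nonbridge_connect nb0 x y) => e'.
by rewrite avoid2E => ->; rewrite /avoid /=; case: (e' == e); case: (e' == inv e).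
Qed.

Definition antisym w := forall e, w (inv e) = - w e.
Definition outflow w (v : V) : rat := \sum_(e | s e == v) w e.
Definition unit_flow (x y v : V) : rat := (x == v)%:R - (y == v)%:R.

Lemma antisym0 : antisym 0. Proof. by move=> e; rewrite !ffunE oppr0. Qed.
Lemma antisymD w w' : antisym w -> antisym w' -> antisym (w + w').
Proof. by move=> aw aw' e; rewrite !ffunE aw aw' opprD. Qed.
Lemma antisymN w : antisym w -> antisym (- w).
Proof. by move=> aw e; rewrite !ffunE aw. Qed.

Lemma outflow0 v : outflow 0 v = 0.
Proof. by rewrite /outflow big1 // => e _; rewrite ffunE. Qed.
Lemma outflowD w w' v : outflow (w + w') v = outflow w v + outflow w' v.
Proof. by rewrite /outflow -big_split; apply: eq_bigr => e _; rewrite ffunE. Qed.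
Lemma outflowN w v : outflow (- w) v = - outflow w v.
Proof. by rewrite /outflow -sumrN; apply: eq_bigr => e _; rewrite ffunE. Qed.

Lemma is_cycleD w w' : is_cycle w -> is_cycle w' -> is_cycle (w + w').
Proof.
case=> aw ow [aw' ow']; split; first exact: antisymD.
by move=> v; rewrite -/(outflow _ v) outflowD /outflow ow ow' addr0.
Qed.

Lemma is_cycleN w : is_cycle w -> is_cycle (- w).
Proof.
case=> aw ow; split; first exact: antisymN.
by move=> v; rewrite -/(outflow _ v) outflowN /outflow ow oppr0.
Qed.

Definition edge_chain e : {ffun E -> rat} :=
  [ffun e' => (e' == e)%:R - (e' == inv e)%:R].

Lemma edge_chain_antisym e : antisym (edge_chain e).
Proof. by move=> e'; rewrite !ffunE inv_eq (inv_eq e' (inv e)) invK opprB. Qed.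

Lemma edge_chain_outflow e v : outflow (edge_chain e) v = unit_flow (s e) (tg e) v.
Proof.
by rewrite /outflow; under eq_bigr do rewrite ffunE; rewrite sumrB !sum_indicator.
Qed.

Lemma edge_chain_self e : edge_chain e e = 1.
Proof. by rewrite ffunE eqxx eq_inv subr0. Qed.

Lemma edge_chain_other e e' : e' != e -> e' != inv e -> edge_chain e e' = 0.
Proof. by rewrite ffunE => /negbTE-> /negbTE->; rewrite subrr. Qed.

Definition step_chain P x y : {ffun E -> rat} :=
  if [pick e | [&& P e, s e == x & tg e == y]] is Some e then edge_chain e else 0.

Fixpoint walk_chain P x (p : seq V) : {ffun E -> rat} :=
  if p is y :: p' then step_chain P x y + walk_chain P y p' else 0.

Lemma step_chainP P x y : step_chain P x y = 0 \/
  exists e, [/\ P e, s e = x, tg e = y & step_chain P x y = edge_chain e].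
Proof.
rewrite /step_chain; case: pickP => [e /and3P[Pe /eqP ex /eqP ey]|_]; last by left.
by right; exists e.
Qed.

Lemma step_chain_adj P x y : adj P x y ->
  exists e, [/\ P e, s e = x, tg e = y & step_chain P x y = edge_chain e].
Proof.
move=> /adjP[e [Pe ex ey]]; rewrite /step_chain.
case: pickP => [e' /and3P[Pe' /eqP e'x /eqP e'y]|/(_ e)]; first by exists e'.
by rewrite Pe ex ey !eqxx.
Qed.

Lemma walk_chain_antisym P x p : antisym (walk_chain P x p).
Proof.
elim: p x => [|y p IHp] x /=; first exact: antisym0.
apply: antisymD => //; case: (step_chainP P x y) => [->|[e [_ _ _ ->]]].
  exact: antisym0.
exact: edge_chain_antisym.
Qed.

Lemma walk_chain_outflow P x p v : path (adj P) x p ->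
  outflow (walk_chain P x p) v = unit_flow x (last x p) v.
Proof.
elim: p x => [|y p IHp] x /=; first by rewrite outflow0 /unit_flow subrr.
case/andP => /step_chain_adj[e [_ ex ey ->]] yp.
by rewrite outflowD edge_chain_outflow IHp // ex ey /unit_flow addrA subrK.
Qed.

Lemma walk_chain_out P x p e : ~~ P e -> ~~ P (inv e) -> walk_chain P x p e = 0.
Proof.
move=> nPe nPie; elim: p x => [|y p IHp] x /=; first by rewrite ffunE.
rewrite ffunE IHp addr0; case: (step_chainP P x y) => [->|[e' [Pe' _ _ ->]]].
  by rewrite ffunE.
apply: edge_chain_other; first by apply: contraNneq nPe => ->.
by apply: contraNneq nPie => ->; rewrite invK.
Qed.

Lemma walk_chain_src P x p e : walk_chain P x p e != 0 -> s e \in x :: p.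
Proof.
elim: p x => [|y p IHp] x /=; first by rewrite ffunE eqxx.
rewrite ffunE inE; case: (step_chainP P x y) => [->|[e' [_ e'x e'y ->]]].
  by rewrite ffunE add0r => /IHp ->; rewrite orbT.
case: (eqVneq e e') => [->|ee']; first by rewrite e'x eqxx.
case: (eqVneq e (inv e')) => [->|eie']; first by rewrite src_inv e'y inE eqxx orbT.
by rewrite edge_chain_other // add0r => /IHp ->; rewrite orbT.
Qed.

Lemma walk_chain_uniq P x p e : uniq (x :: p) ->
  let w := walk_chain P x p in
  [\/ w e = 0, w e = 1 /\ P e | w e = -1 /\ P (inv e)].
Proof.
elim: p x => [|y p IHp] x /=; first by rewrite ffunE; constructor 1.
case/andP => xyp yp; rewrite ffunE.
case: (step_chainP P x y) => [->|[e' [Pe' e'x _ ->]]].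
  by rewrite ffunE add0r; apply: IHp.
have rest0 b : s b = x -> walk_chain P y p b = 0.
  by move=> bx; apply/eqP; apply: contraNT xyp => /walk_chain_src; rewrite bx.
case: (eqVneq e e') => [->|ee'].
  by rewrite edge_chain_self rest0 // addr0; constructor 2.
case: (eqVneq e (inv e')) => [->|eie'].
  rewrite walk_chain_antisym rest0 // oppr0 addr0.
  rewrite (edge_chain_antisym e' e') edge_chain_self.
  by constructor 3; rewrite invK.
by rewrite edge_chain_other // add0r; apply: IHp.
Qed.

Definition loop_chain P e p := edge_chain e + walk_chain P (tg e) p.

Lemma loop_chain_cycle P e p : path (adj P) (tg e) p -> last (tg e) p = s e ->
  is_cycle (loop_chain P e p).
Proof.
move=> ep pe; split.
  by apply: antisymD; [apply: edge_chain_antisym | apply: walk_chain_antisym].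
move=> v; rewrite -/(outflow _ v) outflowD edge_chain_outflow walk_chain_outflow // pe.
by rewrite /unit_flow addrA subrK subrr.
Qed.

Lemma loop_chain_self P e p : ~~ P e -> ~~ P (inv e) -> loop_chain P e p e = 1.
Proof. by move=> nPe nPie; rewrite ffunE walk_chain_out // edge_chain_self addr0. Qed.

Lemma loop_chain_other P e p e' : e' != e -> e' != inv e ->
  loop_chain P e p e' = walk_chain P (tg e) p e'.
Proof. by move=> ee' eie'; rewrite ffunE edge_chain_other // add0r. Qed.

Definition flux S w := \sum_(e | S (s e) && ~~ S (tg e)) w e.

Lemma fluxD S w w' : flux S (w + w') = flux S w + flux S w'.
Proof. by rewrite /flux -big_split; apply: eq_bigr => e _; rewrite ffunE. Qed.

Lemma flux_outflow S w : antisym w -> flux S w = \sum_(v | S v) outflow w v.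
Proof.
move=> aw; have -> : \sum_(v | S v) outflow w v = \sum_(e | S (s e)) w e.
  rewrite (partition_big s S) //=; apply: eq_bigr => v Sv.
  by apply: eq_bigl => e; case: eqP => [->|]; rewrite ?Sv ?andbF.
rewrite (bigID (fun e => S (tg e))) /=; set inside := \sum_(e | _ && _) w e.
have inside_opp : inside = - inside.
  rewrite {1}/inside (reindex_inj inv_inj) /= -sumrN.
  by apply: eq_big => [e|e _]; rewrite ?src_inv ?tgt_inv 1?andbC // aw.
have -> : inside = 0 by lra.
by rewrite add0r.
Qed.

Lemma cycle_flux S g : is_cycle g -> flux S g = 0.
Proof. by case=> ag og; rewrite flux_outflow //; apply: big1 => v _; apply: og. Qed.

Lemma walk_chain_flux S P x p : path (adj P) x p -> S x -> ~~ S (last x p) ->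
  flux S (walk_chain P x p) = 1.
Proof.
move=> xp Sx nSl; rewrite flux_outflow; last exact: walk_chain_antisym.
under eq_bigr do rewrite walk_chain_outflow // /unit_flow (eq_sym x) (eq_sym (last x p)).
by rewrite sumrB !sum_indicator Sx (negbTE nSl) subr0.
Qed.

Lemma positive_flux_connect w x y :
  (forall S, S x -> ~~ S y -> 0 < flux S w) -> connect (adj [pred e | 0 < w e]) x y.
Proof.
move=> pos; apply/negPn/negP => nxy; set S := connect (adj [pred e | 0 < w e]) x.
have := pos S (connect0 _ x) nxy; rewrite ltNge => /negP; apply.
by apply: sumr_le0 => e /andP[Se nSe]; rewrite leNgt; apply: connect_exit Se nSe.
Qed.

Lemma nonbridge_cycle e : ~~ bridge e -> exists2 g, is_cycle g & g e = 1.
Proof.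
move=> nb; have [p [ep pe _]] := connect_upath (nonbridge_connect nb (tg e) (s e)).
exists (loop_chain (avoid e) e p); first exact: loop_chain_cycle.
by apply: loop_chain_self; rewrite /avoid ?invK eqxx ?andbF.
Qed.

Hypothesis connected : gconnected G.

Lemma nonbridge_of_connect e : connect (adj (avoid e)) (s e) (tg e) -> ~~ bridge e.
Proof.
move=> se_te; rewrite negbK; apply: (connected_using_from (x := s e)) => [|y].
  exact: avoid_inv_closed.
apply: (connect_add_edge (Q := predT) (e := e)) (connected_usingP connected _ _).
  by move=> e' _; rewrite /avoid; case: (e' == e); case: (e' == inv e).
by rewrite connect0 se_te.
Qed.

Lemma bridge_cycle0 e g : bridge e -> is_cycle g -> g e = 0.
Proof.
move=> br cg; set S := connect (adj (avoid e)) (s e).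
have nSt : ~~ S (tg e) by apply: contraL br; apply: nonbridge_of_connect.
have := cycle_flux S cg; rewrite /flux (big_pred1 e) // => e' /=.
apply/andP/eqP => [[Se' nSe']|->]; last by rewrite /S connect0.
move: (connect_exit Se' nSe'); rewrite /avoid negb_and !negbK => /orP[/eqP //|/eqP e'ie].
by move: Se'; rewrite e'ie src_inv (negbTE nSt).
Qed.

Lemma cut_pairE e0 e1 : cut_pair e0 e1 = [&& ~~ bridge e0, ~~ bridge e1, e1 != e0,
  e1 != inv e0 & ~~ connect (adj (avoid2 e0 e1)) (s e0) (s e1)].
Proof. by []. Qed.

Lemma cut_pair_cycle_eq e0 e1 g : cut_pair e0 e1 -> is_cycle g -> g e1 = g e0.
Proof.
rewrite cut_pairE => /and5P[nb0 nb1 _ e1i0 nSs1] cg.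
set S := connect (adj (avoid2 e0 e1)) (s e0).
have St1 : S (tg e1).
  apply: contraNT (nSs1) => nSt1; apply: avoid2_connect_all nb0 _.
  by rewrite (negbTE nSs1) -/S (negbTE nSt1).
have nSt0 : ~~ S (tg e0).
  apply: contra (nSs1); rewrite /S !(eq_connect (eq_adj (avoid2C e0 e1))) => St0.
  by apply: avoid2_connect_all nb1 _; rewrite connect0 St0.
have := cycle_flux S cg; rewrite /flux (bigD1 e0) /=; last by rewrite /S connect0.
rewrite (big_pred1 (inv e1)) => [|e]; first by rewrite (cg.1 e1); lra.
apply/idP/eqP => [/andP[/andP[Se nSe] ne0]|->]; last first.
  by rewrite src_inv tgt_inv St1 nSs1 inv_eq e1i0.
move: (connect_exit Se nSe); rewrite /avoid2 !negb_and !negbK.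
case/or4P => /eqP ee; rewrite ee in ne0 Se *.
- by rewrite eqxx in ne0.
- by rewrite src_inv (negbTE nSt0) in Se.
- by case/negP: nSs1.
- by [].
Qed.

Definition cycle_agree e0 e := forall g, is_cycle g -> g e = g e0.

Lemma cycle_agree_inv e0 e : ~~ bridge e0 -> cycle_agree e0 e -> ~ cycle_agree e0 (inv e).
Proof.
move=> nb0 agree agree_inv; have [g cg ge0] := nonbridge_cycle nb0.
by have := agree_inv g cg; rewrite (cg.1 e) agree // ge0; lra.
Qed.

Lemma cut_classP e0 e : ~~ bridge e0 ->
  e \in cut_class e0 <-> ~~ bridge e /\ cycle_agree e0 e.
Proof.
move=> nb0; rewrite inE; split.
  by case/andP => nbe /orP[/eqP-> | cp]; split=> // g cg //; apply: cut_pair_cycle_eq.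
case=> nbe agree; rewrite nbe /=; case: (eqVneq e e0) => //= ee0.
have eie0 : e != inv e0.
  by apply/eqP => eie0; apply: (cycle_agree_inv nb0 agree); rewrite eie0 invK.
rewrite cut_pairE nb0 nbe ee0 eie0 /=; apply/negP => se0_se.
set S := connect (adj (avoid2 e0 e)) (s e0).
have St : S (tg e).
  case cp : (cut_pair e0 (inv e)).
    by case: (cycle_agree_inv nb0 agree) => g cg; apply: cut_pair_cycle_eq.
  move/negbT: cp; rewrite cut_pairE nb0 bridge_inv nbe inv_eq eie0.
  rewrite (inj_eq inv_inj) ee0 /= negbK.
  by rewrite (eq_connect (eq_adj (avoid2_inv e0 e))).
have St0 : S (tg e0) by apply: avoid2_connect_all nb0 _; rewrite se0_se -/S St.
have [p [ep pe _]] : exists p, [/\ path (adj (avoid2 e0 e)) (tg e0) p,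
    last (tg e0) p = s e0 & uniq (tg e0 :: p)].
  by apply: connect_upath; rewrite connect_adj_sym //; apply: avoid2_inv_closed.
have := agree _ (loop_chain_cycle ep pe).
by rewrite loop_chain_self ?loop_chain_other ?walk_chain_out // /avoid2 ?invK ?eqxx ?andbF.
Qed.

Definition parallel e0 e :=
  exists2 k : rat, k ^+ 2 = 1 & forall g, is_cycle g -> g e = k * g e0.

Lemma parallel_refl e : parallel e e.
Proof. by exists 1 => [|g _]; rewrite ?expr1n ?mul1r. Qed.

Lemma parallel_sym e0 e : parallel e0 e -> parallel e e0.
Proof. by case=> k k2 ek; exists k => // g cg; rewrite ek // mulrA -expr2 k2 mul1r. Qed.

Lemma parallel_trans e0 e1 e : parallel e0 e1 -> parallel e1 e -> parallel e0 e.
Proof.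
case=> k k2 e1k [l l2 el]; exists (l * k); first by rewrite exprMn l2 k2 mulr1.
by move=> g cg; rewrite el // e1k // mulrA.
Qed.

Definition parallel_class e : {set E} :=
  [set e0 | (e \in cut_class e0) || (inv e \in cut_class e0)].

Lemma parallel_class_inv e : parallel_class (inv e) = parallel_class e.
Proof. by apply/setP => e0; rewrite !inE invK orbC. Qed.

Lemma cut_class_nonbridge e0 e : e \in cut_class e0 -> ~~ bridge e0.
Proof. by rewrite inE => /andP[nbe /orP[/eqP <- //|/and5P[]]]. Qed.

Lemma parallel_classP e0 e :
  e0 \in parallel_class e <-> [/\ ~~ bridge e0, ~~ bridge e & parallel e0 e].
Proof.
rewrite inE; split.
  case/orP => ecc; have nb0 := cut_class_nonbridge ecc;
    case/(cut_classP _ nb0): ecc => nbe agree.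
    by split => //; exists 1 => [|g cg]; rewrite ?expr1n ?mul1r ?agree.
  split => //; first by rewrite -bridge_inv.
  exists (-1) => [|g cg]; first by rewrite sqrrN expr1n.
  by rewrite -[g e]opprK -(cg.1 e) agree // mulN1r.
case=> nb0 nbe [k k2 ek]; have : (k == 1) || (k == -1) by rewrite -sqrf_eq1 k2.
case/orP => /eqP kE; apply/orP; [left|right]; apply/(cut_classP _ nb0).
  by split=> // g cg; rewrite ek // kE mul1r.
by split; rewrite ?bridge_inv // => g cg; rewrite (cg.1 e) ek // kE mulN1r opprK.
Qed.

Lemma mem_parallel_class e : ~~ bridge e -> e \in parallel_class e.
Proof. by move=> nb; apply/parallel_classP; split => //; apply: parallel_refl. Qed.

Lemma formal_sumE (C : {set E}) e : formal_sum C e = (e \in C)%:R + (inv e \in C)%:R.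
Proof.
rewrite ffunE big_mkcond (bigD1 e) // (bigD1 (inv e)) /=; last by rewrite eq_sym eq_inv.
rewrite big1 => [|e' /andP[/negbTE e'e /negbTE e'ie]]; last by rewrite /same_class e'e e'ie andbF.
by rewrite /same_class !eqxx orbT !andbT addr0; case: (e \in C); case: (inv e \in C).
Qed.

Lemma formal_sum_cut_class e0 e : ~~ bridge e0 ->
  formal_sum (cut_class e0) e = (e0 \in parallel_class e)%:R.
Proof.
move=> nb0; rewrite formal_sumE [e0 \in _]inE.
case ecc: (e \in cut_class e0); case iecc: (inv e \in cut_class e0);
  rewrite ?addr0 ?add0r //.
exfalso; apply: (cycle_agree_inv nb0 ((cut_classP _ nb0).1 ecc).2).
exact: ((cut_classP _ nb0).1 iecc).2.
Qed.

Definition cut_sums (x : {ffun E -> rat}) := exists C, max_cut_system C /\ x = formal_sum C.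

Definition cycle_pairings (x : {ffun E -> rat}) :=
  exists g0 g1, is_cycle g0 /\ is_cycle g1 /\ x = ext_pairing g0 g1.

Lemma in_span_cut_sums (f : {ffun E -> rat}) :
  (forall e, bridge e -> f e = 0) ->
  (forall e0 e, e0 \in parallel_class e -> f e0 = f e) -> in_span cut_sums f.
Proof.
move=> f_bridge f_par.
have par_eq e0 e : e0 \in parallel_class e -> parallel_class e0 = parallel_class e.
  case/parallel_classP => nb0 nbe p0e; apply/setP => e1.
  apply/idP/idP => /parallel_classP[nb1 _ p1]; apply/parallel_classP; split => //.
    exact: parallel_trans p1 p0e.
  exact: parallel_trans p1 (parallel_sym p0e).
have -> : f = [ffun e => \sum_(e0 | ~~ bridge e0)
                 (f e0 / #|parallel_class e0|%:R) * formal_sum (cut_class e0) e].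
  apply/ffunP => e; rewrite ffunE.
  under eq_bigr => e0 nb0 do rewrite formal_sum_cut_class //.
  have -> : \sum_(e0 | ~~ bridge e0)
              f e0 / #|parallel_class e0|%:R * (e0 \in parallel_class e)%:R
          = \sum_(e0 in parallel_class e) f e / #|parallel_class e|%:R.
    rewrite big_mkcond [RHS]big_mkcond; apply: eq_bigr => e0 _ /=.
    have [pe0|_] := boolP (e0 \in parallel_class e); last by rewrite mulr0; case: ifP.
    by rewrite (f_par _ _ pe0) (par_eq _ _ pe0) mulr1; case/parallel_classP: pe0 => ->.
  rewrite sumr_const; have [br|nbe] := boolP (bridge e).
    by rewrite f_bridge // mul0r mul0rn.
  rewrite -(mulr_natr (f e / _)) divfK // pnatr_eq0 -lt0n.
  by apply/card_gt0P; exists e; apply: mem_parallel_class.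
by apply: in_span_sum => e0 nb0; exists (cut_class e0); split => //; exists e0.
Qed.

Lemma ext_pairingE g0 g1 e : antisym g0 -> antisym g1 ->
  ext_pairing g0 g1 e = 2 * (g0 e * g1 e).
Proof.
move=> a0 a1; rewrite ffunE /same_class (bigD1 e) ?eqxx //= (big_pred1 (inv e)) => [|e'].
  by rewrite a0 a1 mulrNN mulr2n mulrDl mul1r.
by case: (eqVneq e' e) => [->|_] /=; rewrite ?eq_inv ?andbT.
Qed.

Lemma cycle_pairing_in_span g0 g1 : is_cycle g0 -> is_cycle g1 ->
  in_span cut_sums (ext_pairing g0 g1).
Proof.
move=> c0 c1; have pE e : ext_pairing g0 g1 e = 2 * (g0 e * g1 e).
  exact: ext_pairingE c0.1 c1.1.
apply: in_span_cut_sums => [e br|e0 e /parallel_classP[_ _ [k k2 ek]]].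
  by rewrite pE (bridge_cycle0 br c0) mul0r mulr0.
by rewrite !pE !ek // mulrACA -expr2 k2 mul1r.
Qed.

Section Augmentation.
Variable e0 : E.
Hypothesis nb0 : ~~ bridge e0.
Local Notation H := (avoid e0).

Lemma cut_pair_of_exit S e1 : ~~ bridge e1 -> H e1 -> S (s e1) -> ~~ S (s e0) ->
  (forall e, H e -> S (s e) -> ~~ S (tg e) -> e = e1) -> cut_pair e0 e1.
Proof.
move=> nbe1 /andP[e1e0 e1ie0] Se1 nSe0 exit_e1; rewrite cut_pairE nb0 nbe1 e1e0 e1ie0 /=.
rewrite connect_adj_sym; last exact: avoid2_inv_closed.
apply: contraNN nSe0 => conn; apply: connect_closed Se1 conn => e ae Se.
have He : H e by move: ae; rewrite avoid2E => /andP[].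
apply/negPn/negP => nSe; move: ae; rewrite (exit_e1 e He Se nSe).
by rewrite /avoid2 eqxx /= !andbF.
Qed.

Definition detour (y : {ffun E -> rat}) : pred E :=
  [pred e | H e && ((e0 \in parallel_class e) || (y e != 1))].

Lemma detour_connect p : path (adj H) (tg e0) p -> last (tg e0) p = s e0 ->
  connect (adj (detour (walk_chain H (tg e0) p))) (tg e0) (s e0).
Proof.
move=> ep pe; set y := walk_chain H (tg e0) p; set R := detour y.
apply/negPn/negP => nS; set S := connect (adj R) (tg e0).
have y_off e : ~~ H e -> y e = 0.
  by move=> nHe; apply: walk_chain_out; rewrite // avoid_inv_closed.
pose exits := [set e | [&& S (s e), ~~ S (tg e) & H e]].
have : flux S y = #|exits|%:R.
  rewrite /flux (bigID H) /= [X in _ + X]big1 ?addr0 => [|e /andP[_ /y_off]//].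
  rewrite -sumr_const; apply: eq_big => [e|e /andP[/andP[Se nSe] He]].
    by rewrite inE andbA.
  move: (connect_exit Se nSe).
  by rewrite /R /detour /= He negb_or negbK => /andP[_ /eqP].
rewrite walk_chain_flux ?pe //; last exact: connect0.
move/esym/eqP; rewrite pnatr_eq1 => /cards1P[e1 exits_e1].
have : e1 \in exits by rewrite exits_e1 set11.
rewrite inE => /and3P[Se1 nSte1 He1].
move: (connect_exit Se1 nSte1); rewrite /R /detour /= He1 negb_or negbK.
case/andP => npar /eqP ye1.
have nbe1 : ~~ bridge e1.
  apply/negP => br; have := bridge_cycle0 br (loop_chain_cycle ep pe).
  case/andP: (He1) => e1e0 e1ie0; rewrite loop_chain_other // -/y ye1.
  by move/eqP; rewrite oner_eq0.
move: npar; rewrite inE negb_or => /andP[/negP[]]; rewrite inE nbe1 /=.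
apply/orP; right; apply: (cut_pair_of_exit (S := S)) => // e He Se nSe.
by apply/set1P; rewrite -exits_e1 inE Se nSe He.
Qed.

Section AugmentingWalks.
Variables py pz pq : seq V.
Local Notation y := (walk_chain H (tg e0) py).
Local Notation z := (walk_chain (detour y) (tg e0) pz).
Local Notation q := (walk_chain [pred e | 0 < (y + z) e] (tg e0) pq).
Hypotheses (upy : uniq (tg e0 :: py)) (upz : uniq (tg e0 :: pz)) (upq : uniq (tg e0 :: pq)).

Lemma augmenting_walks_disjoint e :
  e0 \notin parallel_class e -> q e * (y e + z e - q e) = 0.
Proof.
move=> npar; apply: augment_residue0.
- case: (walk_chain_uniq H e upy) => [|[]|[]] ->.
  + by constructor 1.
  + by constructor 2.
  + by constructor 3.
- case: (walk_chain_uniq (detour y) e upz) => [->|[-> /andP[_]]|[-> /andP[_]]].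
  + by constructor 1.
  + by rewrite (negbTE npar) /=; constructor 2.
  + rewrite parallel_class_inv (negbTE npar) walk_chain_antisym eqr_oppLR /=.
    by constructor 3.
- case: (walk_chain_uniq [pred e | 0 < (y + z) e] e upq) => [->|[-> pos]|[-> neg]].
  + by constructor 1.
  + by constructor 2; rewrite /= ffunE in pos.
  + constructor 3; split => //.
    by rewrite /= ffunE !walk_chain_antisym -opprD oppr_gt0 in neg.
Qed.

End AugmentingWalks.

Lemma two_cycles_product : exists u v,
  [/\ is_cycle u, is_cycle v & forall e, u e * v e = formal_sum (cut_class e0) e].
Proof.
have [py [ppy lpy upy]] := connect_upath (nonbridge_connect nb0 (tg e0) (s e0)).
set y := walk_chain H (tg e0) py.
have [pz [ppz lpz upz]] := connect_upath (detour_connect ppy lpy).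
set z := walk_chain (detour y) (tg e0) pz.
have [pq [ppq lpq upq]] : exists pq, [/\ path (adj [pred e | 0 < (y + z) e]) (tg e0) pq,
    last (tg e0) pq = s e0 & uniq (tg e0 :: pq)].
  apply/connect_upath/positive_flux_connect => S St nSs.
  by rewrite fluxD (walk_chain_flux ppy) ?lpy // (walk_chain_flux ppz) ?lpz //; lra.
set U := loop_chain [pred e | 0 < (y + z) e] e0 pq.
set W := loop_chain H e0 py + loop_chain (detour y) e0 pz - U.
have cU : is_cycle U := loop_chain_cycle ppq lpq.
have cW : is_cycle W.
  by apply: is_cycleD; [apply: is_cycleD | apply: is_cycleN]; apply: loop_chain_cycle.
exists U, W; split => // e; rewrite formal_sum_cut_class //.
have He0 : ~~ H e0 by rewrite /avoid eqxx.
have Hie0 : ~~ H (inv e0) by rewrite /avoid eqxx andbF.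
have z_off e' : ~~ H e' -> ~~ detour y e' by rewrite /detour /= => /negbTE->.
have yz_off e' : ~~ H e' -> ~~ (0 < (y + z) e').
  move=> nH; have nHi : ~~ H (inv e') by rewrite avoid_inv_closed.
  by rewrite ffunE !walk_chain_out ?addr0 ?ltxx // z_off.
have WE e' : W e' = loop_chain H e0 py e' + loop_chain (detour y) e0 pz e' - U e'.
  by rewrite !ffunE.
have U0 : U e0 = 1 by apply: loop_chain_self; apply: yz_off.
have W0 : W e0 = 1 by rewrite WE U0 !loop_chain_self ?z_off // addrK.
have [/parallel_classP[_ _ [k k2 ek]]|npar] := boolP (e0 \in parallel_class e).
  by rewrite (ek U) // (ek W) // U0 W0 mulr1 -expr2 k2.
have [ee0 eie0] : e != e0 /\ e != inv e0.
  by split; apply: contraNneq npar => ->; rewrite ?parallel_class_inv mem_parallel_class.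
rewrite WE /U !loop_chain_other //.
exact: augmenting_walks_disjoint.
Qed.

End Augmentation.

Lemma formal_sum_in_span e0 : ~~ bridge e0 ->
  in_span cycle_pairings (formal_sum (cut_class e0)).
Proof.
move=> nb0; have [u [v [cu cv uv]]] := two_cycles_product nb0.
have -> : formal_sum (cut_class e0) = [ffun e => 2^-1 * ext_pairing u v e].
  by apply/ffunP => e; rewrite [RHS]ffunE (ext_pairingE _ cu.1 cv.1) mulKf // uv.
by apply/in_spanZ/in_span_gen; exists u, v.
Qed.

End Graph.

Theorem lemma9p21 (G : graph) :
  gconnected G ->
  forall x : {ffun edge G -> rat},
    in_span (fun y => exists g0 g1, is_cycle g0 /\ is_cycle g1 /\ y = ext_pairing g0 g1) x
    <-> in_span (fun y => exists C, max_cut_system C /\ y = formal_sum C) x.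
Proof.
move=> connected x; split => span_x; apply: (in_span_trans span_x).
  by move=> _ [g0 [g1 [c0 [c1 ->]]]]; apply: (cycle_pairing_in_span connected).
by move=> _ [C [[e0 [nb0 ->]] ->]]; apply: (formal_sum_in_span connected).
Qed.
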